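(* Let $\Omega$ be a region of $\mathcal{C}^*_{n,A}$ and $1\le k\le m$. For $\bm x\in\Omega$ with associated permutation $\pi$, let $M_k(\bm x)$ be the $n\times n$ matrix with entries $\operatorname{sgn}(x_{\pi(i)}-x_{\pi(j)}-a_k)$, $i,j\in[n]$. Then $M_k(\bm x)$ does not depend on the choice of $\bm x\in\Omega$ (even though $\pi$ may).
   Context: Let $A=\{a_1,\dots,a_m\}$ with $a_1>\dots>a_m>0$, and $\mathcal{C}^*_{n,A}$ the arrangement in $\mathbb{R}^n$ of hyperplanes $x_i-x_j=a_k$ ($i\ne j$, $1\le k\le m$); a region is a connected component of the complement of the union of its hyperplanes. For $\bm x\in\mathbb{R}^n$, the associated permutation of $\bm x$ is the unique $\pi\in\mathfrak{S}_n$ with $x_{\pi(1)}\ge x_{\pi(2)}\ge\dots\ge x_{\pi(n)}$ and such that $\pi^{-1}(i)<\pi^{-1}(j)$ whenever $i<j$ and $x_i=x_j$. Here $\operatorname{sgn}$ takes values in $\{-,0,+\}$. *)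

(* Points of R^n are row vectors 'rV[R]_n,
   with coordinate x_i written  x ord0 i  (i : 'I_n, indices 0..n-1). *)
From HB Require Import structures.
From mathcomp Require Import all_boot all_order all_algebra all_fingroup.
From mathcomp Require Import all_classical all_reals all_analysis.
Set Implicit Arguments. Unset Strict Implicit. Unset Printing Implicit Defensive.
Import Order.TTheory GRing.Theory Num.Theory.
Import numFieldNormedType.Exports.
Local Open Scope classical_set_scope.
Local Open Scope ring_scope.

(* A = {a_0 > a_1 > ... > a_{m-1} > 0}, given as a : 'I_m -> R *)
Definition valid_A (R : realType) (m : nat) (a : 'I_m -> R) : Prop :=
  (forall k : 'I_m, 0 < a k) /\ (forall k l : 'I_m, (k < l)%N -> a l < a k).

Definition arr_complement (R : realType) (n m : nat) (a : 'I_m -> R)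
  : set 'rV[R]_n :=
  [set x | forall (i j : 'I_n) (k : 'I_m), i != j -> x ord0 i - x ord0 j != a k].

Definition is_region (R : realType) (n m : nat) (a : 'I_m -> R)
  (Omega : set 'rV[R]_n) : Prop :=
  exists2 x0, arr_complement a x0 & Omega = connected_component (arr_complement a) x0.

Definition is_assoc_perm (R : realType) (n : nat) (x : 'rV[R]_n) (s : 'S_n) : bool :=
  [forall i : 'I_n, forall j : 'I_n, ((i < j)%N ==> (x ord0 (s j) <= x ord0 (s i)))
     && (((i < j)%N && (x ord0 i == x ord0 j)) ==> ((s^-1)%g i < (s^-1)%g j)%N)].

(* the associated permutation (unique; default 1 never used) *)
Definition assoc_perm (R : realType) (n : nat) (x : 'rV[R]_n) : 'S_n :=
  odflt 1%g [pick s : 'S_n | is_assoc_perm x s].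

Definition Mk (R : realType) (n m : nat) (a : 'I_m -> R) (k : 'I_m)
  (x : 'rV[R]_n) : 'M[int]_n :=
  let s := assoc_perm x in
  \matrix_(i, j) sgz (x ord0 (s i) - x ord0 (s j) - a k).

(* Read with 0-based ranks, M_k(x)_(i,j) is the sign of x_(i) - x_(j) - a_k, where
   x_(0) >= ... >= x_(n-1) are the order statistics of x; they do not depend on how
   the associated permutation breaks ties.  Moreover x_(i) - x_(j) > a_k holds iff some
   i+1 coordinates all exceed some n-j coordinates by more than a_k, so the entries are
   determined by the relation p ~ q :<=> x_p - x_q > a_k.  On a region this relation is
   constant: for p <> q, x_p - x_q - a_k is continuous and never vanishes on the
   connected region, and p ~ p never holds since a_k > 0. *)

From mathcomp Require Import all_boot all_order all_algebra all_fingroup.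
From mathcomp Require Import all_classical all_reals all_analysis.
From mathcomp Require Import zify.
Set Implicit Arguments. Unset Strict Implicit. Unset Printing Implicit Defensive.
Import Order.TTheory GRing.Theory Num.Theory.
Import numFieldNormedType.Exports.

Section StableSort.
Local Open Scope order_scope.
Variables (d : Order.disp_t) (T : orderType d) (n : nat) (f : 'I_n -> T).

Let lexR := [rel p q : 'I_n | (f q <= f p) && ((f p <= f q) ==> (p < q)%N)].

Let lexR_trans : transitive lexR.
Proof.
move=> q p r /andP[le_qp lt_pq] /andP[le_rq lt_qr]; rewrite /= (le_trans le_rq le_qp) /=.
apply/implyP => le_pr; have le_pq := le_trans le_pr le_rq.
have le_qr := le_trans le_qp le_pr.
by rewrite (ltn_trans (implyP lt_pq le_pq) (implyP lt_qr le_qr)).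
Qed.

Lemma stable_sort_perm : exists s : 'S_n,
  (forall i j : 'I_n, (i <= j)%N -> f (s j) <= f (s i)) /\
  (forall p q : 'I_n, (p < q)%N -> f p = f q -> (s^-1 p < s^-1 q)%N)%g.
Proof.
pose srt := sort [rel p q | f q <= f p] (enum 'I_n).
have srt_lex : pairwise lexR srt.
  rewrite -sorted_pairwise //; apply: sort_stable => //; first by move=> p q; exact: le_total.
    exact: ltn_trans.
  by have := iota_ltn_sorted 0 n; rewrite -val_enum_ord sorted_map.
have /tuple_permP[s srtE] : perm_eq srt (ord_tuple n) by rewrite perm_sort perm_refl.
have lex_s (i j : 'I_n) : (i < j)%N -> lexR (s i) (s j).
  move=> lt_ij; have /(pairwiseP i)/(_ i j) := srt_lex.
  by rewrite srtE size_tuple !inE !nth_mktuple !tnth_ord_tuple !ltn_ord; apply.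
exists s; split=> [i j|p q lt_pq fpq].
  by rewrite leq_eqVlt => /predU1P[/val_inj -> //|/lex_s/andP[]].
case: (ltngtP (s^-1 p)%g (s^-1 q)%g) => // [lt_qp|/val_inj/perm_inj pq].
  by have /andP[_] := lex_s _ _ lt_qp; rewrite !permKV fpq lexx /= ltnNge ltnW.
by move: lt_pq; rewrite pq ltnn.
Qed.
End StableSort.

Lemma card_ord_ltn n c : (c <= n)%N -> #|[set l : 'I_n | (l < c)%N]| = c.
Proof.
move=> le_cn; rewrite cardsE cardE /enum_mem -enumT /= size_filter.
rewrite -(count_map val (fun l => l < c)%N) val_enum_ord -size_filter.
by rewrite (filter_iota_ltn 0 le_cn) size_iota.
Qed.

Lemma exists_inj_geq n (g : 'I_n -> 'I_n) (S : {set 'I_n}) c :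
  injective g -> (c < #|S|)%N -> exists2 p, p \in S & (c <= g p)%N.
Proof.
move=> g_inj lt_cS.
have le_cn : (c <= n)%N by rewrite -(card_ord n) (leq_trans (ltnW lt_cS)) ?max_card.
apply/exists_inP; move: lt_cS; apply: contraLR.
rewrite negb_exists_in -leqNgt => /forall_inP gS_lt.
rewrite -(card_imset _ g_inj) -(card_ord_ltn le_cn); apply: subset_leq_card.
by apply/fintype.subsetP => _ /imsetP[p Sp ->]; rewrite inE ltnNge gS_lt.
Qed.

(* A description of [P (s i) (s j)] that does not mention the sorting permutation [s]
   (see [rank_relE]). *)
Definition rank_rel n (P : rel 'I_n) (i j : nat) : bool :=
  [exists S : {set 'I_n}, exists T : {set 'I_n},
    [&& #|S| == i.+1, #|T| == (n - j)%N & [forall p in S, forall q in T, P p q]]].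

Section RankRel.
Local Open Scope order_scope.
Variables (d : Order.disp_t) (T : orderType d) (n : nat) (f : 'I_n -> T).
Variables (s : 'S_n) (P : rel 'I_n).
Hypothesis s_sorts : forall i j : 'I_n, (i <= j)%N -> f (s j) <= f (s i).
Hypothesis P_mono : forall p q p' q', f p <= f p' -> f q' <= f q -> P p q -> P p' q'.

Lemma rank_relE (i j : 'I_n) : rank_rel P i j = P (s i) (s j).
Proof.
have [lt_in lt_jn] := (ltn_ord i, ltn_ord j).
apply/idP/idP.
  case/existsP=> U /existsP[V /and3P[/eqP cardU /eqP cardV /forall_inP UV]].
  have [p Up le_ip] : exists2 p, p \in U & (i <= s^-1 p)%N%g.
    by apply: exists_inj_geq; [exact: perm_inj | rewrite cardU].
  have [q Vq le_qj] : exists2 q, q \in V & (n - j.+1 <= rev_ord (s^-1 q))%N%g.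
    by apply: exists_inj_geq; [exact/inj_comp/perm_inj/rev_ord_inj | rewrite cardV; lia].
  apply: (P_mono _ _ (forall_inP (UV p Up) q Vq)).
    by rewrite -{1}(permKV s p); apply: s_sorts.
  rewrite -{1}(permKV s q); apply: s_sorts; move: le_qj => /=.
  by have := ltn_ord (s^-1 q)%g; lia.
move=> Psij; apply/existsP; exists (s @: [set l : 'I_n | (l < i.+1)%N]).
apply/existsP; exists (s @: ~: [set l : 'I_n | (l < j)%N]).
rewrite !card_imset; try exact: perm_inj.
rewrite [#|~: _|]cardsCs finset.setCK card_ord !card_ord_ltn ?(ltnW lt_jn) // !eqxx /=.
apply/forall_inP => _ /imsetP[l1 + ->]; rewrite inE => lt_l1i.
apply/forall_inP => _ /imsetP[l2 + ->]; rewrite !inE -leqNgt => le_jl2.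
by apply: P_mono Psij; apply: s_sorts.
Qed.
End RankRel.

Local Open Scope classical_set_scope.
Local Open Scope ring_scope.

Lemma connected_gt0_eq (T : topologicalType) (R : realType) (A : set T) (f : T -> R) :
  connected A -> {within A, continuous f} -> (forall z, A z -> f z != 0) ->
  {in A &, forall u v, (0 < f u) = (0 < f v)}.
Proof.
move=> cA cf f_neq0.
have fA_itv : is_interval (f @` A).
  exact/connected_intervalP/connected_continuous_connected.
have gt0_transfer u v : A u -> A v -> 0 < f u -> 0 < f v.
  move=> Au Av fu_gt0; rewrite lt_neqAle eq_sym f_neq0 //= leNgt; apply/negP => fv_lt0.
  have [w Aw fw0] : (f @` A) 0.
    by apply: (fA_itv (f v) (f u)); [exists v | exists u | rewrite !ltW].
  by have := f_neq0 w Aw; rewrite fw0 eqxx.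
by move=> u v; rewrite !inE => Au Av; apply/idP/idP; apply: gt0_transfer.
Qed.

Definition gap_gt (R : numDomainType) n (c : R) (x : 'rV[R]_n) : rel 'I_n :=
  fun p q => c < x ord0 p - x ord0 q.

Lemma gap_gt_component (R : realType) n m (a : 'I_m -> R) (k : 'I_m) (x0 x y : 'rV[R]_n) :
  0 < a k ->
  connected_component (arr_complement a) x0 x ->
  connected_component (arr_complement a) x0 y ->
  gap_gt (a k) x = gap_gt (a k) y.
Proof.
move=> ak_gt0 Cx Cy; apply/funext => p; apply/funext => q.
have [->|neq_pq] := eqVneq p q; first by rewrite /gap_gt !subrr ltNge ltW.
pose g := (fun z : 'rV[R]_n => z ord0 p) - (fun z => z ord0 q) - cst (a k).
suff: (0 < g x) = (0 < g y) by rewrite /g /= !subr_gt0.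
apply: (@connected_gt0_eq _ _ (connected_component (arr_complement a) x0)); rewrite ?inE //.
- exact: component_connected.
- apply: continuous_subspaceT => z.
  by apply: continuousB; [apply: continuousB; exact: coord_continuous | exact: cst_continuous].
- by move=> z /connected_component_sub Cz; rewrite subr_eq0; exact: Cz neq_pq.
Qed.

Lemma assoc_permP (R : realType) n (x : 'rV[R]_n) : is_assoc_perm x (assoc_perm x).
Proof.
rewrite /assoc_perm; case: pickP => [s //|no_perm].
have [s [s_sorts s_stable]] := stable_sort_perm (fun i => x ord0 i).
case/negP: (negbT (no_perm s)); apply/forallP => i; apply/forallP => j.
apply/andP; split; apply/implyP; first by move/ltnW; exact: s_sorts.
by case/andP=> lt_ij /eqP; exact: s_stable.
Qed.

Lemma assoc_perm_sorts (R : realType) n (x : 'rV[R]_n) (i j : 'I_n) :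
  (i <= j)%N -> x ord0 (assoc_perm x j) <= x ord0 (assoc_perm x i).
Proof.
rewrite leq_eqVlt => /predU1P[/val_inj -> //|lt_ij].
by have /forallP/(_ i)/forallP/(_ j)/andP[/implyP/(_ lt_ij)] := assoc_permP x.
Qed.

Lemma MkE (R : realType) n m (a : 'I_m -> R) (k : 'I_m) (x : 'rV[R]_n) :
  0 < a k -> arr_complement a x ->
  Mk a k x = \matrix_(i, j) (if rank_rel (gap_gt (a k) x) i j then 1 else -1).
Proof.
move=> ak_gt0 x_off; apply/matrixP => i j; rewrite !mxE.
set s := assoc_perm x.
rewrite (@rank_relE _ _ _ (fun p => x ord0 p) s) /gap_gt; first last.
- by move=> p q p' q' le_pp' le_q'q /lt_le_trans; apply; apply: lerB.
- exact: assoc_perm_sorts.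
have gap_neq0 : x ord0 (s i) - x ord0 (s j) - a k != 0.
  have [->|neq_ij] := eqVneq i j; first by rewrite subrr sub0r oppr_eq0 gt_eqF.
  by rewrite subr_eq0; apply: x_off; rewrite (inj_eq perm_inj).
case: ifPn => [gap_gt_ak|]; first by rewrite gtr0_sgz // subr_gt0.
by rewrite -subr_gt0 => /negP gap_ngt0; rewrite ltr0_sgz // lt_neqAle gap_neq0 leNgt; apply/negP.
Qed.

Theorem proposition2p3 (R : realType) (n m : nat) (a : 'I_m -> R)
  (hA : valid_A a) (Omega : set 'rV[R]_n) (hOmega : is_region a Omega)
  (k : 'I_m) (x y : 'rV[R]_n) (hx : Omega x) (hy : Omega y) :
  Mk a k x = Mk a k y.
Proof.
case: hOmega => x0 _ Omega_eq; rewrite Omega_eq in hx hy.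
have ak_gt0 := hA.1 k.
rewrite (MkE ak_gt0 (connected_component_sub hx)) (MkE ak_gt0 (connected_component_sub hy)).
by rewrite (gap_gt_component ak_gt0 hx hy).
Qed.
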